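(* Let $\mathcal{G}\subseteq C(\mathbb{R},\mathbb{R})$ be nonempty. The following conditions are equivalent: (1) $\{\mathrm{CL}(E):E\in\mathrm{CL}(\mathbb{R})\}\subseteq\mathcal{K}_\mathcal{G}$; (2) the least element of $(\mathcal{K}_\mathcal{G},\subseteq)$ is $\{\emptyset\}$; (3) for each $x\in\mathbb{R}$, $\mathcal{G}[x]\neq\mathbb{R}$.
   Context: For a closed set $E\subseteq\mathbb{R}$, $\mathrm{CL}(E)$ denotes the family of all closed subsets of $E$; $C(\mathbb{R},\mathbb{R})$ is the set of continuous functions $\mathbb{R}\to\mathbb{R}$. For $\mathcal{G}\subseteq C(\mathbb{R},\mathbb{R})$ and $x\in\mathbb{R}$, $\mathcal{G}[x]=\{g(x):g\in\mathcal{G}\}$. Let $R_\mathcal{G}=\{(f,E)\in C(\mathbb{R},\mathbb{R})\times\mathrm{CL}(\mathbb{R}):(\exists g\in\mathcal{G})\, f\restriction E=g\restriction E\}$; for $\mathcal{F}\subseteq C(\mathbb{R},\mathbb{R})$ put $E_\mathcal{G}(\mathcal{F})=\{E\in\mathrm{CL}(\mathbb{R}):(\forall f\in\mathcal{F})\,(f,E)\in R_\mathcal{G}\}$, and let $\mathcal{K}_\mathcal{G}=\{E_\mathcal{G}(\mathcal{F}):\mathcal{F}\subseteq C(\mathbb{R},\mathbb{R})\}$, ordered by inclusion (a complete lattice). *)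

From mathcomp Require Import all_boot all_order all_algebra.
From mathcomp Require Import all_classical all_reals all_analysis.
Set Implicit Arguments. Unset Strict Implicit. Unset Printing Implicit Defensive.
Import Order.TTheory GRing.Theory Num.Theory.
Local Open Scope classical_set_scope.
Local Open Scope ring_scope.
Import numFieldNormedType.Exports.

Definition Cont (R : realType) : set (R -> R) := [set f : R -> R | continuous (f : R -> R)].

Definition CL (R : realType) (E : set R) : set (set R) :=
  [set F | closed F /\ F `<=` E].

Definition RG (R : realType) (G : set (R -> R)) (f : R -> R) (E : set R) : Prop :=
  @Cont R f /\ @CL R setT E /\ exists2 g, G g & (forall x, E x -> f x = g x).

Definition EG (R : realType) (G : set (R -> R)) (F : set (R -> R)) : set (set R) :=
  [set E | @CL R setT E /\ forall f, F f -> RG G f E].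

Definition KG (R : realType) (G : set (R -> R)) : set (set (set R)) :=
  [set K | exists2 F, F `<=` @Cont R & K = EG G F].

Definition Gat (R : realType) (G : set (R -> R)) (x : R) : set R :=
  [set g x | g in G].

(* The empty set lies in every E_G(F) because G is nonempty, so {∅} is below
   every member of K_G.  If G[x] = R for some x, every continuous f agrees with
   some g ∈ G on {x}, so {x} lies in every E_G(F) and {∅} ∉ K_G.  Conversely, if
   no G[x] is all of R, fix g0 ∈ G and let F_E be the continuous functions equal
   to g0 on E that take, at some point off E, a value taken there by no g ∈ G.
   Then E_G(F_E) = CL(E): a closed D containing a point y ∉ E is excluded by the
   Urysohn interpolant between g0 on E and such a value at y.  Finally
   CL(∅) = {∅}. *)

From mathcomp Require Import all_boot all_order all_algebra.
From mathcomp Require Import all_classical all_reals all_analysis.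
Import GRing.Theory.
Import numFieldNormedType.Exports.
Local Open Scope classical_set_scope.
Local Open Scope ring_scope.

Lemma continuous_interpolate_off_closed {T : uniformType} {R : realType}
    (E : set T) (y : T) (g : T -> R) (c : R) :
  closed E -> ~ E y -> continuous g ->
  exists2 h : T -> R, continuous h & (forall z, E z -> h z = g z) /\ h y = c.
Proof.
move=> cE Ey cg.
have [f [cf _ f0 f1]] :=
  (@uniform_separatorP T R _ _).1 (@point_uniform_separator R T _ _ cE Ey).
exists (fun z => f z * g z + (1 - f z) * c).
  move=> z; apply: (@continuousD R R^o T (fun z => f z * g z)
                                           (fun z => (1 - f z) * c)).
  - exact: continuousM (cf z) (cg z).
  - apply: (@continuousM R T (fun z => 1 - f z) (fun=> c) z).
      by apply: (@continuousB R R^o T (fun=> 1) f z); [exact: cst_continuous|exact: cf].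
    exact: cst_continuous.
split=> [z Ez|].
- by rewrite (imsub1 f1) // mul1r subrr mul0r addr0.
- by rewrite (imsub1 f0) // mul0r subr0 mul1r add0r.
Qed.

Local Close Scope ring_scope.

Section EG_lattice.
Variables (R : realType) (G : set (R -> R)).

Lemma CL_set0 : @CL R set0 = [set set0].
Proof.
apply/seteqP; split=> [D [_ D0]|D ->]; first by rewrite /= -subset0.
by split; [exact: closed0|].
Qed.

Lemma EG_set0 (F : set (R -> R)) : G !=set0 -> F `<=` @Cont R -> EG G F set0.
Proof.
move=> [g0 Gg0] FC; split; first by split; [exact: closed0|].
by move=> f Ff; split; [exact: FC|split; [split; [exact: closed0|]|exists g0]].
Qed.

Lemma set0_le_KG (K : set (set R)) :
  G !=set0 -> KG G K -> [set set0] `<=` K.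
Proof. by move=> G0 [F FC ->] D ->; exact: EG_set0. Qed.

Lemma EG_set1 (F : set (R -> R)) (x : R) :
  Gat G x = setT -> F `<=` @Cont R -> EG G F [set x].
Proof.
have cx : @CL R setT [set x].
  by split; [exact/accessible_closed_set1/hausdorff_accessible/Rhausdorff|].
move=> Gx FC; split=> // f Ff; split; [exact: FC|split=> //].
have : Gat G x (f x) by rewrite Gx.
by case=> g Gg gx; exists g => // z ->.
Qed.

Lemma KG_set0_Gat (x : R) : KG G [set set0] -> Gat G x <> setT.
Proof.
case=> F FC EF0 Gx.
have : [set set0] [set x] by rewrite EF0; exact: EG_set1.
by move/seteqP => [/(_ x erefl)].
Qed.

Definition leaving_G (g0 : R -> R) (E : set R) : set (R -> R) :=
  [set f | @Cont R f /\ (forall z, E z -> f z = g0 z) /\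
           exists2 x, ~ E x & ~ Gat G x (f x)].

Lemma EG_leaving_G (g0 : R -> R) (E : set R) :
  G `<=` @Cont R -> G g0 -> (forall x, Gat G x <> setT) -> closed E ->
  EG G (leaving_G g0 E) = @CL R E.
Proof.
move=> GC Gg0 GxT cE; apply/seteqP; split=> [D [[cD _] DG]|D [cD DE]].
  split=> // y Dy; apply: contrapT => Ey.
  have [c Gyc] : exists c, ~ Gat G y c.
    apply: contrapT => allc; apply: (GxT y); apply/seteqP; split=> // c _.
    by apply: contrapT => Gyc; apply: allc; exists c.
  have [f cf [fE fy]] :=
    continuous_interpolate_off_closed _ _ _ c cE Ey (GC _ Gg0).
  have [_ [_ [g Gg fg]]] : RG G f D.
    by apply: DG; split=> //; split=> //; exists y; rewrite ?fy.
  by apply: Gyc; exists g => //; rewrite -fy fg.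
split; first by split.
move=> f [cf [fE _]]; split=> //; split; first by split.
by exists g0 => // z Dz; apply/fE/DE.
Qed.

Lemma KG_CL (E : set R) :
  G `<=` @Cont R -> G !=set0 -> (forall x, Gat G x <> setT) -> closed E ->
  KG G (@CL R E).
Proof.
move=> GC [g0 Gg0] GxT cE; exists (leaving_G g0 E); first by move=> f [].
by rewrite EG_leaving_G.
Qed.

End EG_lattice.

Theorem theorem3p2 (R : realType) (G : set (R -> R)) :
  G `<=` @Cont R -> G !=set0 ->
  ( (forall E : set R, closed (E : set R) -> KG G (@CL R E)) <->
    (KG G [set set0] /\ (forall K, KG G K -> [set set0] `<=` K)) ) /\
  ( (KG G [set set0] /\ (forall K, KG G K -> [set set0] `<=` K)) <->
    (forall x : R, Gat G x <> setT) ).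
Proof.
move=> GC G0.
have KG_set0 : (forall E, closed E -> KG G (@CL R E)) -> KG G [set set0].
  by move=> CL_in; have := CL_in set0 closed0; rewrite CL_set0.
have least K : KG G K -> [set set0] `<=` K by exact: set0_le_KG.
split; split.
- by move=> CL_in; split; [exact: KG_set0|exact: least].
- by move=> [KG0 _] E; apply: KG_CL => // x; exact: KG_set0_Gat.
- by move=> [KG0 _] x; exact: KG_set0_Gat.
- by move=> GxT; split; [apply: KG_set0 => E; exact: KG_CL|exact: least].
Qed.
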